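(* For fixed $r>1$ and integer $N\ge1$, the quantity $\gamma(r,K,N)$ is nondecreasing in the integer $K\ge1$, where $\gamma(r,K,N)$ is the supremum of $$\frac{p^K}{z^K}\sum_{i=1}^{K-1}\frac{z^i}{\sum_{j=i}^Kp^j}$$ over all $p=(p^1,\dots,p^K)$ with $rp^K\ge1$, $\sum_{i=1}^Kp^i=1$, $p^i>0$ for all $i$, and $z^i=(\sum_{j=1}^ip^j)^N-(\sum_{j=1}^{i-1}p^j)^N$. *)

From HB Require Import structures.
From mathcomp Require Import all_boot all_order all_algebra.
From mathcomp Require Import all_classical all_reals ereal.
Set Implicit Arguments. Unset Strict Implicit. Unset Printing Implicit Defensive.
Import Order.TTheory GRing.Theory Num.Theory.
Local Open Scope ring_scope.
Local Open Scope classical_set_scope.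

(* A vector p = (p^1,...,p^K) is represented by p : nat -> R; only the
   values p 1, ..., p K matter. *)

Definition psum (R : realType) (p : nat -> R) (i : nat) : R :=
  \sum_(1 <= j < i.+1) p j.

Definition zseq (R : realType) (N : nat) (p : nat -> R) (i : nat) : R :=
  psum p i ^+ N - psum p i.-1 ^+ N.

Definition objective (R : realType) (K N : nat) (p : nat -> R) : R :=
  p K / zseq N p K *
  \sum_(1 <= i < K) (zseq N p i / \sum_(i <= j < K.+1) p j).

Definition admissible (R : realType) (r : R) (K : nat) (p : nat -> R) : Prop :=
  1 <= r * p K /\ \sum_(1 <= i < K.+1) p i = 1 /\
  (forall i : nat, (1 <= i <= K)%N -> 0 < p i).

Definition gamma (R : realType) (r : R) (K N : nat) : \bar R :=
  ereal_sup [set (objective K N p)%:E | p in admissible r K].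

(* Splitting the first coordinate of p into e and p^1 - e turns an admissible
   vector of length K into one of length K + 1: the last coordinate and the
   later increments z^i and tail sums are only shifted, while the first term
   p^N / S of the sum becomes e^N / S + (p^N - e^N) / (S - e), which is larger.
   Hence every value of the objective at length K is dominated by one at
   length K + 1, and gamma is nondecreasing in K. *)
From HB Require Import structures.
From mathcomp Require Import all_boot all_order all_algebra.
From mathcomp Require Import all_classical all_reals ereal.
From mathcomp Require Import lra.
Set Implicit Arguments. Unset Strict Implicit.
Import Order.TTheory GRing.Theory Num.Theory.
Local Open Scope ring_scope.

Lemma ler_split_quotient (R : numFieldType) (a b c s e : R) :
  b <= a -> 0 <= e -> e < s -> (a - c) / s <= (b - c) / s + (a - b) / (s - e).
Proof.
move=> le_ba e_ge0 lt_es; have s_gt0 : 0 < s by apply: le_lt_trans lt_es.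
have -> : a - c = (b - c) + (a - b) by rewrite [RHS]addrC addrA subrK.
rewrite mulrDl lerD2l ler_wpM2l ?subr_ge0 // lef_pV2 ?posrE ?subr_gt0 //.
by rewrite gerBl.
Qed.

Section SplitHead.
Variables (R : realType) (N : nat).
Implicit Types (p : nat -> R) (e : R).

Lemma psum0 p : psum p 0 = 0.
Proof. by rewrite /psum big_geq. Qed.

Lemma psumS p i : psum p i.+1 = psum p i + p i.+1.
Proof. by rewrite /psum big_nat_recr. Qed.

Lemma psum_le p K i j : (forall k, (1 <= k <= K)%N -> 0 <= p k) ->
  (i <= j <= K)%N -> psum p i <= psum p j.
Proof.
move=> p_ge0 /andP[le_ij le_jK].
rewrite /psum [leRHS](big_cat_nat _ (n := i.+1)) //= lerDl big_nat_cond.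
rewrite sumr_ge0 // => k /andP[/andP[lt_ik lt_kj] _].
by rewrite p_ge0 // (leq_ltn_trans _ lt_ik) //= -ltnS (leq_trans lt_kj).
Qed.

Lemma zseq_ge0 p K i : (forall k, (1 <= k <= K)%N -> 0 <= p k) ->
  (i <= K)%N -> 0 <= zseq N p i.
Proof.
move=> p_ge0 le_iK; have le_i'K := leq_trans (leq_pred i) le_iK.
rewrite /zseq subr_ge0 lerXn2r // ?nnegrE -?[0](psum0 p) (psum_le p_ge0) //.
by rewrite leq_pred.
Qed.

Lemma objective_ge0 p K : (forall k, (1 <= k <= K)%N -> 0 <= p k) ->
  0 <= objective K N p.
Proof.
rewrite /objective; case: K => [|K] p_ge0; first by rewrite big_geq ?mulr0.
rewrite mulr_ge0 ?divr_ge0 ?(zseq_ge0 p_ge0) ?p_ge0 ?leqnn //.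
rewrite big_nat_cond sumr_ge0 //.
move=> i /andP[/andP[i_gt0 lt_iK] _].
rewrite divr_ge0 ?(zseq_ge0 p_ge0) 1?ltnW // big_nat_cond sumr_ge0 //.
move=> j /andP[/andP[le_ij lt_jK] _].
by rewrite p_ge0 // (leq_trans i_gt0 le_ij).
Qed.

Definition split_head p e (i : nat) : R :=
  if i == 1%N then e else if i == 2%N then p 1 - e else p i.-1.

Lemma psum_split_head p e i : psum (split_head p e) i.+2 = psum p i.+1.
Proof.
elim: i => [|i IH]; last by rewrite psumS IH [RHS]psumS.
by rewrite !psumS !psum0 /split_head /= !add0r addrC subrK.
Qed.

Lemma zseq_split_head p e i : zseq N (split_head p e) i.+3 = zseq N p i.+2.
Proof. by rewrite /zseq !psum_split_head. Qed.

Lemma tail_split_head p e i K :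
  \sum_(i.+3 <= j < K.+2) split_head p e j = \sum_(i.+2 <= j < K.+1) p j.
Proof. by rewrite big_add1 /=; apply: eq_big_nat => -[|[|j]]. Qed.

Lemma objective_split_head p e K : (1 <= K)%N ->
  (forall k, (1 <= k <= K)%N -> 0 <= p k) -> 0 <= e < p 1 ->
  objective K N p <= objective K.+1 N (split_head p e).
Proof.
move=> K_gt0 p_ge0 /andP[e_ge0 lt_ep].
case: K K_gt0 p_ge0 => [//|[|k]] _ p_ge0.
  rewrite {1}/objective big_geq // mulr0 objective_ge0 // => -[|[|[]]] //= _.
  by rewrite /split_head /= subr_ge0 ltW.
set S := \sum_(1 <= j < k.+3) p j.
have p1 : psum p 1 = p 1 by rewrite psumS psum0 add0r.
have lt_eS : e < S.
  by apply: lt_le_trans lt_ep _; rewrite -p1 (psum_le p_ge0) ?leqnn.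
have sumq : \sum_(1 <= j < k.+4) split_head p e j = S by apply: psum_split_head.
have tailq2 : \sum_(2 <= j < k.+4) split_head p e j = S - e.
  by rewrite -sumq [in RHS]big_ltn //= [RHS]addrC addKr.
rewrite /objective zseq_split_head.
have -> : split_head p e k.+3 = p k.+2 by [].
apply: ler_wpM2l; first by rewrite divr_ge0 ?(zseq_ge0 p_ge0) ?p_ge0 ?leqnn.
set G := fun i => zseq N p i / \sum_(i <= j < k.+3) p j.
set F := fun i => zseq N (split_head p e) i / \sum_(i <= j < k.+4) split_head p e j.
have shiftF : \sum_(3 <= i < k.+3) F i = \sum_(2 <= i < k.+2) G i.
  rewrite big_add1 /=; apply: eq_big_nat => -[|[|i]] // _.
  by rewrite /F /G zseq_split_head tail_split_head.
rewrite big_ltn // [\sum_(1 <= i < k.+3) F i]big_ltn //.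
rewrite [\sum_(2 <= i < k.+3) F i]big_ltn // shiftF.
rewrite addrA lerD2r /F /G sumq tailq2.
rewrite /zseq /= (psum_split_head p e 0) !psum0.
have -> : psum (split_head p e) 1 = e by rewrite psumS psum0 add0r.
rewrite p1 ler_split_quotient // lerXn2r ?nnegrE ?(ltW lt_ep) //.
exact: le_trans e_ge0 (ltW lt_ep).
Qed.
End SplitHead.

Lemma admissible_split_head (R : realType) (r : R) K (p : nat -> R) e :
  (1 <= K)%N -> admissible r K p -> 0 < e < p 1 ->
  1 <= r * split_head p e K.+1 -> admissible r K.+1 (split_head p e).
Proof.
move=> K_gt0 [_ [sum1 p_gt0]] /andP[e_gt0 lt_ep] last_ge; split=> //; split.
  by case: K K_gt0 sum1 {p_gt0 last_ge} => // k _; apply: etrans (psum_split_head _ _ _).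
move=> [|[|[|i]]] //= i_le; rewrite /split_head /=; first by rewrite subr_gt0.
by apply: p_gt0.
Qed.

Lemma admissible_succ (R : realType) (r : R) N K (p : nat -> R) :
  1 < r -> (1 <= K)%N -> admissible r K p ->
  exists2 q, admissible r K.+1 q & objective K N p <= objective K.+1 N q.
Proof.
move=> r_gt1 K_gt0 adm; have [last_ge [sum1 p_gt0]] := adm.
have p1_gt0 : 0 < p 1 by rewrite p_gt0 ?leqnn.
have rVr : r^-1 * r = 1 by rewrite mulVf // gt_eqF // (lt_trans ltr01).
have rV_gt0 : 0 < r^-1 by rewrite invr_gt0 (lt_trans ltr01).
have rV_lt1 : r^-1 < 1 by rewrite invf_lt1 // (lt_trans ltr01).
(* For K = 1 (so p 1 = 1) this e leaves r * (1 - e) = (r + 1) / 2 >= 1. *)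
set e := p 1 * (1 - r^-1) / 2.
have e_gt0 : 0 < e by rewrite /e; nra.
have lt_ep : e < p 1 by rewrite /e; nra.
exists (split_head p e); last first.
  apply: objective_split_head; rewrite ?ltW ?e_gt0 //.
  by move=> k /p_gt0/ltW.
apply: admissible_split_head; rewrite ?e_gt0 //.
case: K K_gt0 {adm p_gt0} last_ge sum1 => [|[|k]] // _ _.
rewrite big_nat1 /split_head /= => p1; rewrite /e p1.
nra.
Qed.

Lemma gamma_le_succ (R : realType) (r : R) K N :
  1 < r -> (1 <= K)%N -> (gamma r K N <= gamma r K.+1 N)%E.
Proof.
move=> r_gt1 K_gt0; apply: ge_ereal_sup => _ [p adm <-].
have [q adm_q le_pq] := admissible_succ N r_gt1 K_gt0 adm.
apply: (@le_trans _ _ (objective K.+1 N q)%:E); first by rewrite lee_fin.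
by apply: ereal_sup_ubound; exists q.
Qed.

Theorem lemma3 (R : realType) (r : R) (N K1 K2 : nat) :
  1 < r -> (1 <= N)%N -> (1 <= K1)%N -> (K1 <= K2)%N ->
  (gamma r K1 N <= gamma r K2 N)%E.
Proof.
move=> r_gt1 _; case: K1 => // k1 _; case: K2 => // k2 le_k12.
have gamma_mono : {homo (fun k => gamma r k.+1 N) : i j / (i <= j)%N >-> (i <= j)%E}.
  apply: homo_leq => [x|y x z|k]; [exact: lexx | exact: le_trans |].
  exact: gamma_le_succ.
exact: gamma_mono.
Qed.
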